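(* Let $X$ be a paracompact topologically complete space and let $\mathcal A$ be a cofinal subfamily of the family of all closed, locally finite, normal covers of $X$ (i.e. every closed, locally finite, normal cover of $X$ is refined by some member of $\mathcal A$). With $\Lambda$, $N_\lambda\subset F_\lambda$ and $\pi^\mu_\lambda$ as in the context, for each $\lambda\in\Lambda$ there exists $\mu\in\Lambda$ with $\mu\supseteq\lambda$ such that $\pi^\mu_\lambda(F_\mu)\subset N_\lambda$. In particular, the system of inclusions $(N_\lambda\hookrightarrow F_\lambda;\lambda\in\Lambda)$ is an isomorphism in the category pro-Top between the inverse systems $(N_\lambda,\pi^\mu_\lambda;\Lambda)$ and $(F_\lambda,\pi^\mu_\lambda;\Lambda)$.
   Context: A topologically complete space is a Tychonoff space complete with respect to its finest uniformity. A closed, locally finite, normal cover $\alpha$ of $X$ is a locally finite cover by closed sets admitting a partition of unity $\{\phi_{\alpha,V}:V\in\alpha\}$ with $\mathrm{cl}(\phi_{\alpha,V}^{-1}((0,1]))\subset\mathrm{int}(V)$, $\sum_V\phi_{\alpha,V}=1$. Construction: $\Lambda$ is the set of finite subsets of $\mathcal A$ directed by inclusion. For $\lambda\in\Lambda$, $N^{(0)}_\lambda$ is the set of functions $v$ on $\lambda$ with $v(\alpha)\in\alpha$ for all $\alpha\in\lambda$ and $\wedge v:=\bigcap_{\alpha\in\lambda}v(\alpha)\neq\emptyset$ (empty intersection meaning $X$). $F_\lambda$ is the simplicial complex (weak topology) with vertex set $N^{(0)}_\lambda$ in which $\{v_1,\dots,v_k\}$ spans a simplex iff $\wedge v_i\cap\wedge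 v_j\neq\emptyset$ for all $i,j$; $N_\lambda$ is its subcomplex with the same vertices in which $\{v_1,\dots,v_k\}$ spans a simplex iff $\bigcap_i\wedge v_i\neq\emptyset$. For $\lambda\subset\mu$, $\pi^\mu_\lambda:F_\mu\to F_\lambda$ is the simplicial map sending each vertex $v$ to its restriction $v|_\lambda$; it maps $N_\mu$ into $N_\lambda$. *)

From HB Require Import structures.
From mathcomp Require Import all_boot all_order all_algebra.
From mathcomp Require Import all_classical all_reals all_analysis.
From mathcomp Require Import Rstruct Rstruct_topology.
Set Implicit Arguments. Unset Strict Implicit. Unset Printing Implicit Defensive.
Import Order.TTheory GRing.Theory Num.Theory.
Local Open Scope classical_set_scope.
Local Open Scope ring_scope.

Notation Real := Rdefinitions.R.

Section Defs.
Variable X : topologicalType.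

Definition tychonoff_space : Prop :=
  completely_regular_space X /\ hausdorff_space X.

Definition locally_finite_family (al : set (set X)) : Prop :=
  forall x : X, exists2 U, nbhs x U &
    finite_set [set V | al V /\ V `&` U !=set0].

Definition covers (al : set (set X)) : Prop := \bigcup_(V in al) V = setT.

Definition refines (al be : set (set X)) : Prop :=
  forall V, al V -> exists2 W, be W & V `<=` W.

Definition paracompact_space : Prop :=
  hausdorff_space X /\
  forall be : set (set X), (forall W, be W -> open W) -> covers be ->
    exists al : set (set X), [/\ (forall V, al V -> open V), covers al,
                                 locally_finite_family al & refines al be].

Definition compatible_uniformity (U : set (set (X * X))) : Prop :=
  [/\ U setT,
      (forall E F, U E -> E `<=` F -> U F),
      (forall E F, U E -> U F -> U (E `&` F)) &
      (forall E, U E -> forall x, E (x, x))] /\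
  [/\
      (forall E, U E -> U [set p | E (p.2, p.1)]),
      (forall E, U E -> exists2 D, U D &
          forall x y z, D (x, y) -> D (y, z) -> E (x, z)) &
      (forall (x : X) (A : set X),
          nbhs x A <-> exists2 E, U E & [set y | E (x, y)] `<=` A)].

(** The finest (universal) uniformity: the supremum of all compatible
    uniformities; a filter is Cauchy for it iff it contains, for every
    entourage [E] of every compatible uniformity, a set [A] with
    [A x A] included in [E]. *)
Definition fine_cauchy (F : set_system X) : Prop :=
  forall U, compatible_uniformity U -> forall E, U E ->
    exists2 A, F A & forall x y, A x -> A y -> E (x, y).

Definition topologically_complete : Prop :=
  tychonoff_space /\
  forall F : set_system X, ProperFilter F -> fine_cauchy F ->
    exists x : X, F --> x.

(** A partition of unity [phi] subordinated to [al] as in the paper: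
    continuous [phi V : X -> [0,1]] for [V] in [al], with
    cl(phi_V^{-1}((0,1])) in int V and sum_V phi_V = 1 (the sum being
    pointwise finite: only finitely many phi_V are nonzero at each x). *)
Definition partition_of_unity (al : set (set X)) (phi : set X -> X -> Real)
  : Prop :=
  [/\ (forall V, al V -> continuous (phi V)),
      (forall V, al V -> forall x, 0 <= phi V x <= 1),
      (forall V, al V ->
          closure [set x | 0 < phi V x] `<=` interior V) &
      (forall x : X, exists s : seq (set X),
          [/\ uniq s, (forall V, V \in s -> al V),
              (forall V, al V -> V \notin s -> phi V x = 0) &
              \sum_(V <- s) phi V x = 1])].

Definition closed_lf_normal_cover (al : set (set X)) : Prop :=
  [/\ (forall V, al V -> closed V), covers al, locally_finite_family al &
      exists phi, partition_of_unity al phi].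

(** [lam : set (set (set X))] is a finite set of covers (an element of
    Lambda).  A vertex of F_lambda (= of N_lambda) is a function [v]
    choosing [v al \in al] for each [al \in lam] with nonempty meet.
    Outside [lam] the values of [v] are irrelevant. *)
Definition meet (lam : set (set (set X))) (v : set (set X) -> set X)
  : set X := [set x | forall al, lam al -> v al x].

Definition is_vertex (lam : set (set (set X))) (v : set (set X) -> set X)
  : Prop := (forall al, lam al -> al (v al)) /\ meet lam v !=set0.

Definition F_simplex (lam : set (set (set X)))
  (s : seq (set (set X) -> set X)) : Prop :=
  s <> [::] /\ (forall v, v \in s -> is_vertex lam v) /\
  (forall v w, v \in s -> w \in s -> meet lam v `&` meet lam w !=set0).

Definition N_simplex (lam : set (set (set X)))
  (s : seq (set (set X) -> set X)) : Prop :=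
  s <> [::] /\ (forall v, v \in s -> is_vertex lam v) /\
  [set x | forall v, v \in s -> meet lam v x] !=set0.

(** Restriction v |-> v|_lam (canonical representative: empty outside lam).
    This is the vertex map of the simplicial map pi^mu_lam. *)
Definition restr (lam : set (set (set X))) (v : set (set X) -> set X)
  : set (set X) -> set X :=
  fun al => if `[< lam al >] then v al else set0.

Definition pi_F_into_N (mu lam : set (set (set X))) : Prop :=
  forall s, F_simplex mu s -> N_simplex lam (map (restr lam) s).

End Defs.

(* The members of the covers in lam are closed and locally finite, so
   [cover_core lam x] is an open neighbourhood of x.  Paracompactness yields
   locally finite partitions of unity, hence an open star refinement VV of the
   cover by these neighbourhoods and a closed, locally finite, normal cover
   refining VV; cofinality refines the latter by some al0 in A, and
   mu = lam + {al0} works.  Indeed, if the vertices of a simplex of F_mu have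
   pairwise meeting meets, then the al0-members of all of them meet the
   al0-member of one fixed vertex, so they all lie in a single
   [cover_core lam x0]; hence x0 lies in v(al) for every vertex v and every
   al in lam. *)

From HB Require Import structures.
From mathcomp Require Import all_boot all_order all_algebra.
From mathcomp Require Import all_classical all_reals all_analysis.
From mathcomp Require Import Rstruct Rstruct_topology lra.
Set Implicit Arguments. Unset Strict Implicit. Unset Printing Implicit Defensive.
Import Order.TTheory GRing.Theory Num.Theory.
Local Open Scope classical_set_scope.
Local Open Scope ring_scope.
Local Notation R := Rdefinitions.R.

Lemma filter_bigcap_finite (T : Type) (I : choiceType) (F : set_system T)
    (D : set I) (P : I -> set T) :
  Filter F -> finite_set D -> (forall i, D i -> F (P i)) ->
  F (\bigcap_(i in D) P i).
Proof.
move=> FF finD FP; have := @filter_bigI T I (fset_set D) P F FF.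
by rewrite fset_setK //; apply=> i; rewrite in_fset_set // inE; apply: FP.
Qed.

Lemma big_undup_map_fibers (R : Type) (idx : R) (op : Monoid.com_law idx)
    (I J : eqType) (s : seq I) (p : I -> J) (F : I -> R) :
  \big[op/idx]_(j <- undup (map p s)) \big[op/idx]_(i <- s | p i == j) F i =
  \big[op/idx]_(i <- s) F i.
Proof.
under eq_bigr do rewrite big_mkcond; rewrite exchange_big /=.
apply: eq_big_seq => i si.
rewrite (bigD1_seq (p i)) ?undup_uniq ?mem_undup ?map_f //= eqxx.
by rewrite big1 ?Monoid.mulm1 // => j; rewrite eq_sym => /negbTE ->.
Qed.

Section Covers.
Variable X : topologicalType.
Implicit Types (al be ga : set (set X)) (V : set X).

Lemma coversP al : covers al <-> forall x, exists2 V, al V & V x.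
Proof.
split=> [cov x | cov]; first by have : (\bigcup_(V in al) V) x by rewrite cov.
by apply/seteqP; split=> // x _; have [V ? ?] := cov x; exists V.
Qed.

Lemma refines_trans al be ga : refines al be -> refines be ga -> refines al ga.
Proof.
move=> ab bc V /ab [W /bc [Z gZ WZ] VW].
by exists Z => // y /VW /WZ.
Qed.

Lemma locally_finite_familyS al be :
  be `<=` al -> locally_finite_family al -> locally_finite_family be.
Proof.
move=> ba lfal x; have [U Ux finU] := lfal x; exists U => //.
by apply: sub_finite_set finU => V [/ba alV VU].
Qed.

Lemma locally_finite_image al (G : set X -> set X) :
  (forall V, al V -> G V `<=` V) ->
  locally_finite_family al -> locally_finite_family (G @` al).
Proof.
move=> GV lfal x; have [U Ux finU] := lfal x; exists U => //.
apply: sub_finite_set (finite_image G finU) => _ [[V alV <-] [y [GVy Uy]]].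
by exists V => //; split=> //; exists y; split=> //; apply: GV.
Qed.

Lemma closure_bigcup_locally_finite al : locally_finite_family al ->
  closure (\bigcup_(V in al) V) `<=` \bigcup_(V in al) closure V.
Proof.
move=> lfal x clx; apply: contrapT => nx; have [U Ux finU] := lfal x.
have : nbhs x (\bigcap_(V in [set V | al V /\ V `&` U !=set0]) ~` V).
  apply: filter_bigcap_finite => // V [alV _].
  have : (~` V)° x by rewrite interiorC => clVx; apply: nx; exists V.
  by [].
move=> /(filterI Ux) /clx [y [[V alV Vy] [Uy nV]]].
have VU : V `&` U !=set0 by exists y.
exact: nV V (conj alV VU) Vy.
Qed.

Lemma closed_bigcup_locally_finite al : locally_finite_family al ->
  (forall V, al V -> closed V) -> closed (\bigcup_(V in al) V).
Proof.
move=> lfal clal x /(closure_bigcup_locally_finite lfal) [V alV /(clal _ alV) Vx].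
by exists V.
Qed.

End Covers.

Definition bump_refinement (X : topologicalType) (O HH : set (set X))
    (f : set X -> X -> R) : Prop :=
  [/\ locally_finite_family HH, refines HH O,
      (forall h, HH h -> [/\ continuous (f h), (forall x, 0 <= f h x <= 1) &
                           (forall x, ~ h x -> f h x = 0)]) &
      (forall x, exists2 h, HH h & f h x = 1)].

Definition star_refines (X : topologicalType) (VV O : set (set X)) : Prop :=
  forall V1, VV V1 -> exists2 W, O W &
    forall V, VV V -> V `&` V1 !=set0 -> V `<=` W.

Section Paracompact.
Variable X : topologicalType.
Hypothesis paraX : paracompact_space X.

Lemma paracompact_separation (C D : set X) : closed C ->
  (forall y, C y -> exists2 V, open V /\ V y & closure V `&` D = set0) ->
  exists E, [/\ open E, C `<=` E & closure E `&` D = set0].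
Proof.
move=> clC sepC; have [_ refine] := paraX.
pose be := [set W | (open W /\ closure W `&` D = set0) \/ W = ~` C].
have [||al [oal /coversP coval lfal ref]] := refine be.
- by move=> W [[]//|->]; apply: closed_openC.
- apply/coversP => y; have [Cy|nCy] := pselect (C y).
    by have [V [oV Vy] clVD] := sepC y Cy; exists V => //; left.
  by exists (~` C); [right|].
pose G := [set V | al V /\ V `&` C !=set0].
exists (\bigcup_(V in G) V); split.
- by apply: bigcup_open => V [/oal].
- by move=> y Cy; have [V alV Vy] := coval y; exists V => //; split=> //; exists y.
- apply/seteqP; split=> // z [].
  have lfG : locally_finite_family G by apply: locally_finite_familyS lfal => V [].
  move=> /(closure_bigcup_locally_finite lfG) [V [alV [c [Vc Cc]]] clVz] Dz.
  have [W [[_ clWD]|WC] VW] := ref V alV.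
    by rewrite -clWD; split=> //; apply: closureS clVz.
  by move: (VW c Vc); rewrite WC.
Qed.

Lemma paracompact_regular (x : X) (O : set X) : open O -> O x ->
  exists N, [/\ open N, N x & closure N `<=` O].
Proof.
move=> oO Ox; have [hsX _] := paraX.
have [|E [oE nOE clEx]] := paracompact_separation (open_closedC oO) (D := [set x]).
  move=> y nOy; have xy : x != y by apply: contraPneq nOy => <-.
  move: hsX; rewrite open_hausdorff => /(_ x y xy) [[A B] /=].
  rewrite !inE => -[Ax By] [oA oB AB0]; exists B => //.
  apply/seteqP; split=> // _ [/[swap] /= -> /(_ A (open_nbhs_nbhs (conj oA Ax)))].
  by move=> [z [Bz Az]]; have : (A `&` B) z by []; rewrite AB0.
exists (~` closure E); split.
- exact/closed_openC/closed_closure.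
- by move=> clEx'; have : (closure E `&` [set x]) x by []; rewrite clEx.
- have sub : ~` closure E `<=` ~` E by apply: subsetC; apply: subset_closure.
  move=> z /(closureS sub) /(open_closedC oE) nEz.
  by apply: contrapT => nOz; apply: nEz; apply: nOE.
Qed.

Lemma paracompact_normal : normal_space X.
Proof.
apply/(@normal_openP R) => A B clA clB AB0.
have [|E [oE BE clEA]] := paracompact_separation clB (D := A).
  move=> y By; have nAy : ~ A y by move=> Ay; have : (A `&` B) y by []; rewrite AB0.
  have [N [oN Ny clN]] := paracompact_regular (closed_openC clA) nAy.
  by exists N => //; apply/seteqP; split=> // z [/clN].
exists (~` closure E), E; split=> //.
- exact/closed_openC/closed_closure.
- by move=> z Az clEz; have : (closure E `&` A) z by []; rewrite clEA.
- by apply/seteqP; split=> // z [/[swap] /subset_closure].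
Qed.

Lemma paracompact_shrinking (O : set (set X)) :
  (forall W, O W -> open W) -> covers O ->
  exists C : set X -> set X,
    (forall W, O W -> closed (C W) /\ C W `<=` W) /\
    (forall x, exists2 W, O W & C W x).
Proof.
move=> oO /coversP cO; have [_ refine] := paraX.
pose NN := [set N | open N /\ exists2 W, O W & closure N `<=` W].
have [||KK [_ /coversP cK lfK rK]] := refine NN.
- by move=> N [].
- apply/coversP => x; have [W OW Wx] := cO x.
  have [N [oN Nx clN]] := paracompact_regular (oO W OW) Wx.
  by exists N => //; split=> //; exists W.
pose KW W := [set K | KK K /\ closure K `<=` W].
exists (fun W => closure (\bigcup_(K in KW W) K)); split.
  move=> W OW; split; first exact: closed_closure.
  have lfKW : locally_finite_family (KW W).
    by apply: locally_finite_familyS lfK => K [].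
  by move=> z /(closure_bigcup_locally_finite lfKW) [K [_ KW']] /KW'.
move=> x; have [K KKK Kx] := cK x; have [N [_ [W OW clNW]] KN] := rK K KKK.
exists W => //; apply: subset_closure; exists K => //; split=> //.
by move=> z /(closureS KN) /clNW.
Qed.

Lemma paracompact_bump_refinement (O : set (set X)) :
  (forall W, O W -> open W) -> covers O -> exists HH f, bump_refinement O HH f.
Proof.
move=> oO cO; have [_ refine] := paraX.
have [HH [oH cH lfH rH]] := refine O oO cO.
have [C [CH /= CP]] := paracompact_shrinking oH cH.
have sepC h : HH h -> uniform_separator (~` h) (C h).
  move=> Hh; have [clC Ch] := CH h Hh.
  apply: (normal_uniform_separator paracompact_normal) clC _.
    exact: open_closedC (oH h Hh).
  by apply/seteqP; split=> // z [nhz /Ch].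
exists HH, (fun h => Urysohn (~` h) (C h)); split=> // [h Hh|x].
  split=> [|x|x nhx]; first exact: Urysohn_continuous.
    have : [set` `[0, 1]] (Urysohn (~` h) (C h) x : R).
      by apply: Urysohn_range; exists x.
    by rewrite /= in_itv.
  by apply: (@Urysohn_sub0 X R _ _ (sepC h Hh)); exists x.
have [h Hh Chx] := CP x; exists h => //.
by apply: (@Urysohn_sub1 X R _ _ (sepC h Hh)); exists x.
Qed.

End Paracompact.

Lemma bump_refinement_star (X : topologicalType) (O HH : set (set X)) f :
  bump_refinement O HH f ->
  exists VV, [/\ forall V, VV V -> open V, covers VV & star_refines VV O].
Proof.
case=> lfH rH fP f1.
(* Every bump is within 1/4 of its value at w on [V w]; a bump equal to 1 at
   w1 is thus positive on the whole star of [V w1]. *)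
pose V w := [set y | forall h, HH h -> `|f h y - f h w| < 1/4]°.
have Vww w : V w w.
  have [U Uw finU] := lfH w.
  have : nbhs w (\bigcap_(h in [set h | HH h /\ h `&` U !=set0])
                   [set y | `|f h y - f h w| < 1/4]).
    apply: filter_bigcap_finite => // h [Hh _]; have [fc _ _] := fP h Hh.
    by apply: (@cvgr_distC_lt _ R^o _ _ _ (f h) _ (fc w)); lra.
  move=> /(filterI Uw); apply: filterS => y [Uy near_y] h Hh.
  have [hU|nhU] := pselect (h `&` U !=set0); first exact: near_y.
  have [_ _ f0] := fP h Hh.
  have off z : U z -> ~ h z by move=> Uz hz; apply: nhU; exists z.
  rewrite (f0 y (off y Uy)) (f0 w (off w (nbhs_singleton Uw))) subrr normr0; lra.
exists (range V); split.
- by move=> _ [w _ <-]; apply: open_interior.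
- by apply/coversP => w; exists (V w) => //; exists w.
move=> _ [w1 _ <-]; have [h Hh fh1] := f1 w1; have [W OW hW] := rH h Hh.
exists W => // _ [w _ <-] [p [pw pw1]] z zw; apply: hW; apply: contrapT => nhz.
have [_ _ f0] := fP h Hh.
have := interior_subset pw1 h Hh; have := interior_subset pw h Hh.
have := interior_subset zw h Hh; rewrite f0 // fh1.
by rewrite !ltr_norml => /andP[? ?] /andP[? ?] /andP[? ?]; lra.
Qed.

Section GroupedPartitionOfUnity.
Variables (X : topologicalType) (HH : set (set X)) (k : set X -> X -> R).
Variable B : set X -> set X.
Hypothesis lfHH : locally_finite_family HH.
Hypothesis k_cont : forall h, HH h -> continuous (k h).
Hypothesis k_ge0 : forall h x, 0 <= k h x.
Hypothesis k_supp : forall h x, HH h -> ~ h x -> k h x = 0.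
Hypothesis k_pos : forall x, exists2 h, HH h & 0 < k h x.
Hypothesis B_sub : forall h, HH h -> B h `<=` h.
Hypothesis k_inner : forall h, HH h -> closure [set x | 0 < k h x] `<=` (B h)°.

Lemma fsum_locally_finite (x : X) : exists2 U, nbhs x U & exists s : seq (set X),
  [/\ uniq s, (forall h, h \in s -> HH h),
      (forall h, HH h -> h `&` U !=set0 -> h \in s) &
      forall P, P `<=` HH -> forall y, U y ->
        \sum_(h \in P) k h y = \sum_(h <- s | `[< P h >]) k h y].
Proof.
have [U Ux finU] := lfHH x; exists U => //.
set G := [set h | HH h /\ h `&` U !=set0] in finU *.
have memG h : (h \in finmap.enum_fset (fset_set G)) = `[< G h >].
  exact: in_fset_set.
exists (finmap.enum_fset (fset_set G)); split.
- exact: finmap.fset_uniq.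
- by move=> h; rewrite memG => /asboolP [].
- by move=> h Hh hU; rewrite memG; apply/asboolP.
move=> P PH y Uy; rewrite [RHS]bigfs; last 2 first.
- exact: finmap.fset_uniq.
- move=> h /asboolP Ph; rewrite memG => /asboolP nGh; apply: k_supp (PH _ Ph) _.
  by move=> hy; apply: nGh; split; [exact: PH | exists y].
by congr (\big[_/_]_(i \in _) _); apply/seteqP; split=> h /= => [/asboolP|/asboolP].
Qed.

Lemma continuous_fsum P : P `<=` HH -> continuous (fun x => \sum_(h \in P) k h x).
Proof.
move=> PH x; have [U Ux [s [_ _ _ e]]] := fsum_locally_finite x.
have gc : continuous (fun y => \sum_(h <- s | `[< P h >]) k h y).
  apply: continuous_big => [|h /asboolP /PH].
    exact: (@add_continuous R^o).
  exact: k_cont.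
rewrite /continuous_at e //; last exact: nbhs_singleton.
apply: cvg_trans (gc x); apply: near_eq_cvg; apply: filterS Ux => y Uy.
by rewrite e.
Qed.

Lemma fsum_gt0 (x : X) : 0 < \sum_(h \in HH) k h x.
Proof.
have [h0 Hh0 kh0] := k_pos x.
have [U /nbhs_singleton Ux [s [us sH Hs e]]] := fsum_locally_finite x.
have h0s : h0 \in s.
  apply: Hs => //; exists x; split=> //.
  by apply: contrapT => nh0x; move: kh0; rewrite k_supp // ltxx.
rewrite (e HH) // big_mkcond (bigD1_seq h0) //= asboolT //.
apply: (lt_le_trans kh0); rewrite lerDl; apply: sumr_ge0 => h _.
by case: ifP.
Qed.

Lemma fsum_le P x : P `<=` HH -> \sum_(h \in P) k h x <= \sum_(h \in HH) k h x.
Proof.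
move=> PH; have [U /nbhs_singleton Ux [s [_ _ _ e]]] := fsum_locally_finite x.
rewrite !e // [leLHS]big_mkcond [leRHS]big_mkcond /=.
apply: ler_sum => h _; case: (asboolP (P h)) => [/PH Hh|_].
  by rewrite asboolT.
by case: ifP.
Qed.

(* Distinct members h may give the same set [B h]: the weight of V collects
   all of them. *)
Definition grouped_weight V x :=
  (\sum_(h \in [set h | HH h /\ B h = V]) k h x) / \sum_(h \in HH) k h x.

Lemma grouped_weight_continuous V : continuous (grouped_weight V).
Proof.
move=> x; apply: cvgM; first by apply: continuous_fsum => h [].
apply: cvgV; first by rewrite gt_eqF ?fsum_gt0.
exact: continuous_fsum.
Qed.

Lemma grouped_weight_ge0_le1 V x : 0 <= grouped_weight V x <= 1.
Proof.
have Kx := fsum_gt0 x; rewrite /grouped_weight divr_ge0 ?fsumr_ge0 ?(ltW Kx) //=.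
by rewrite ler_pdivrMr // mul1r; apply: fsum_le => h [].
Qed.

Lemma closure_grouped_weight_support V :
  closure [set x | 0 < grouped_weight V x] `<=` V°.
Proof.
pose TT := (fun h => closure [set x | 0 < k h x]) @` [set h | HH h /\ B h = V].
have lfTT : locally_finite_family TT.
  apply: locally_finite_image; last by apply: locally_finite_familyS lfHH => h [].
  by move=> h [Hh _] x /(k_inner Hh) /interior_subset /(B_sub Hh).
have supp : [set x | 0 < grouped_weight V x] `<=` \bigcup_(T in TT) T.
  move=> x; rewrite /= /grouped_weight pmulr_lgt0 ?invr_gt0 ?fsum_gt0 //.
  (* fsumr_gt0 takes a spurious seq argument *)
  move=> /(@fsumr_gt0 _ _ [::]) [h hV kh].
  by exists (closure [set x | 0 < k h x]); [by exists h | exact: subset_closure].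
move=> x /(closureS supp) /(closure_bigcup_locally_finite lfTT) [_ [h [Hh <-] <-]].
by move=> /closed_closure /(k_inner Hh).
Qed.

Lemma grouped_weight_sum x : exists s : seq (set X),
  [/\ uniq s, (forall V, V \in s -> (B @` HH) V),
      (forall V, (B @` HH) V -> V \notin s -> grouped_weight V x = 0) &
      \sum_(V <- s) grouped_weight V x = 1].
Proof.
have [U /nbhs_singleton Ux [s [_ sH _ e]]] := fsum_locally_finite x.
have fiberE V :
    \sum_(h \in [set h | HH h /\ B h = V]) k h x = \sum_(h <- s | B h == V) k h x.
  rewrite e // => [|h []//]; rewrite big_seq_cond [RHS]big_seq_cond.
  apply: eq_bigl => h; case hs: (h \in s) => //=.
  by apply/asboolP/eqP => [[]//|]; split=> //; apply: sH.
have sumE : \sum_(h \in HH) k h x = \sum_(h <- s) k h x.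
  rewrite e // big_seq_cond [RHS]big_seq_cond; apply: eq_bigl => h.
  by case hs: (h \in s) => //=; apply/asboolP/sH.
exists (undup (map B s)); split.
- exact: undup_uniq.
- by move=> V; rewrite mem_undup => /mapP [h /sH Hh ->]; exists h.
- move=> V _ nV; rewrite /grouped_weight fiberE big1_seq ?mul0r //.
  move=> h /andP [/eqP BhV hs].
  by move: nV; rewrite -BhV mem_undup map_f.
rewrite /grouped_weight -mulr_suml; under eq_bigr do rewrite fiberE.
by rewrite big_undup_map_fibers -sumE mulfV // gt_eqF ?fsum_gt0.
Qed.

Lemma partition_of_unity_grouped : partition_of_unity (B @` HH) grouped_weight.
Proof.
split=> [V _|V _ x|V _|x]; [exact: grouped_weight_continuous |
  exact: grouped_weight_ge0_le1 | exact: closure_grouped_weight_support |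
  exact: grouped_weight_sum].
Qed.

End GroupedPartitionOfUnity.

Lemma bump_refinement_normal_cover (X : topologicalType) (O HH : set (set X)) f :
  bump_refinement O HH f -> exists2 be, closed_lf_normal_cover be & refines be HH.
Proof.
case=> lfH _ fP f1.
(* The gap between the thresholds 1/2 and 2/3 puts the closed support of
   [k h] inside the interior of [B h]. *)
pose B h := [set x | 1/2 <= f h x].
pose k h x := Num.max 0 (f h x - 2/3).
have fc h : HH h -> continuous (f h) by case/fP.
have f0 h x : HH h -> ~ h x -> f h x = 0 by move=> /fP [_ _]; apply.
have B_sub h : HH h -> B h `<=` h.
  move=> Hh x Bx; apply: contrapT => /(f0 _ _ Hh) fx.
  by move: Bx; rewrite /B /= fx; lra.
have k_cont h : HH h -> continuous (k h).
  move=> /fc c x; apply: (@continuous_max _ _ (fun=> 0) (fun y => f h y - 2/3)).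
    exact: cvg_cst.
  by apply: cvgB; [exact: c | exact: cvg_cst].
have k_ge0 h x : 0 <= k h x by rewrite le_max lexx.
have k_supp h x : HH h -> ~ h x -> k h x = 0.
  by move=> Hh /(f0 _ _ Hh) fx; rewrite /k fx; apply/max_idPl; lra.
have k_pos x : exists2 h, HH h & 0 < k h x.
  have [h Hh fx] := f1 x; exists h => //.
  by rewrite /k fx lt_max; apply/orP; right; lra.
have k_inner h : HH h -> closure [set x | 0 < k h x] `<=` (B h)°.
  move=> Hh; have sub : [set x | 0 < k h x] `<=` f h @^-1` [set r | 2/3 <= r].
    by move=> x; rewrite /= /k lt_max ltxx /=; lra.
  have cl : closed (f h @^-1` [set r : R | 2/3 <= r]).
    by apply: preimage_closed => [x _|]; [exact: fc | exact: closed_ge].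
  have : f h @^-1` [set r : R | 1/2 < r] `<=` (B h)°.
    rewrite -open_subsetE => [y /=|]; first by rewrite /B /=; lra.
    by apply: open_comp => [y _|]; [exact: fc | exact: open_gt].
  by move=> sub2 x /(closureS sub) /cl /= fx; apply: sub2; rewrite /=; lra.
exists (B @` HH); last by move=> _ [h Hh <-]; exists h => //; apply: B_sub.
split.
- move=> _ [h Hh <-]; apply: (@preimage_closed _ _ (f h) [set r : R | 1/2 <= r]).
    by move=> x _; apply: fc.
  exact: closed_ge.
- apply/coversP => x; have [h Hh fx] := f1 x.
  by exists (B h); [exists h | rewrite /B /= fx; lra].
- exact: locally_finite_image.
- by exists (grouped_weight HH k B); apply: partition_of_unity_grouped.
Qed.

Section ParacompactRefinements.
Variable X : topologicalType.
Hypothesis paraX : paracompact_space X.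
Variable O : set (set X).
Hypotheses (oO : forall W, O W -> open W) (cO : covers O).

Lemma paracompact_star_refinement :
  exists VV, [/\ forall V, VV V -> open V, covers VV & star_refines VV O].
Proof.
have [HH [f bumps]] := paracompact_bump_refinement paraX oO cO.
exact: bump_refinement_star bumps.
Qed.

Lemma paracompact_normal_refinement :
  exists2 be, closed_lf_normal_cover be & refines be O.
Proof.
have [HH [f bumps]] := paracompact_bump_refinement paraX oO cO.
have [be nbe beHH] := bump_refinement_normal_cover bumps.
by exists be => //; apply: refines_trans beHH _; case: bumps.
Qed.

End ParacompactRefinements.

Section Nerves.
Variable X : topologicalType.
Implicit Types lam : set (set (set X)).

Definition cover_core lam (x : X) : set X :=
  [set y | forall al, lam al -> forall V, al V -> V y -> V x].

Lemma open_cover_core lam x : finite_set lam ->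
  (forall al, lam al -> (forall V, al V -> closed V) /\ locally_finite_family al) ->
  open (cover_core lam x).
Proof.
move=> finlam lamP; rewrite openE => y yx.
pose Out al := \bigcup_(V in [set V | al V /\ ~ V x]) V.
have : nbhs y (\bigcap_(al in lam) ~` Out al).
  apply: filter_bigcap_finite => // al lal; have [clal lfal] := lamP al lal.
  apply: open_nbhs_nbhs; split.
    apply/closed_openC/closed_bigcup_locally_finite => [|V [/clal]//].
    by apply: locally_finite_familyS lfal => V [].
  by move=> [V [alV nVx] Vy]; apply: nVx; apply: yx alV Vy.
apply: filterS => z zx al lal V alV Vz; apply: contrapT => nVx.
by apply: (zx al lal); exists V.
Qed.

Lemma star_refinement_pi_F_into_N lam VV (al0 : set (set X)) :
  star_refines VV (range (cover_core lam)) -> refines al0 VV ->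
  pi_F_into_N (lam `|` [set al0]) lam.
Proof.
move=> starVV al0VV s [sne [sv pw]].
have restrE v al : lam al -> restr lam v al = v al.
  by move=> lal; rewrite /restr asboolT.
have al0_mu : (lam `|` [set al0]) al0 by right.
case: s sne sv pw => [//|w1 s] _ sv pw.
have [V1 VV1 w1V1] := al0VV _ ((sv w1 (mem_head _ _)).1 al0 al0_mu).
have [_ [x0 _ <-] star] := starVV V1 VV1.
have meet_x0 v : v \in w1 :: s -> meet lam (restr lam v) x0.
  move=> vs al lal; rewrite restrE //.
  have [p [pw1 pv]] := pw w1 v (mem_head _ _) vs; have [vmu _] := sv v vs.
  have [V VV_V vV] := al0VV _ (vmu al0 al0_mu).
  have Vx0 : V `<=` cover_core lam x0.
    by apply: star => //; exists p; split; [apply/vV/pv | apply/w1V1/pw1].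
  apply: (Vx0 p (vV p (pv al0 al0_mu)) al lal (v al)); first by apply: vmu; left.
  by apply: pv; left.
split=> //; split.
  move=> _ /mapP [v vs ->]; have [vmu [p pv]] := sv v vs; split.
    by move=> al lal; rewrite restrE //; apply: vmu; left.
  by exists p => al lal; rewrite restrE //; apply: pv; left.
by exists x0 => _ /mapP [v vs ->]; apply: meet_x0.
Qed.

End Nerves.

Local Close Scope ring_scope.

Theorem theorem2p6 (X : topologicalType)
  (A : set (set (set X)))
  (hpara : paracompact_space X)
  (hcompl : topologically_complete X)
  (hA : forall al, A al -> closed_lf_normal_cover al)
  (hcof : forall be, closed_lf_normal_cover be ->
            exists2 al, A al & refines al be) :
  forall lam : set (set (set X)), finite_set lam -> lam `<=` A ->
    exists mu : set (set (set X)),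
      [/\ finite_set mu, mu `<=` A, lam `<=` mu & pi_F_into_N mu lam].
Proof.
move=> lam finlam lamA.
have lamP al : lam al -> (forall V, al V -> closed V) /\ locally_finite_family al.
  by move=> /lamA /hA [].
have [||VV [oVV cVV starVV]] :=
  paracompact_star_refinement hpara (O := range (cover_core lam)).
- by move=> _ [x _ <-]; apply: open_cover_core.
- by apply/coversP => x; exists (cover_core lam x); [exists x | move=> al _ V _].
have [be nbe beVV] := paracompact_normal_refinement hpara oVV cVV.
have [al0 Aal0 al0be] := hcof be nbe.
exists (lam `|` [set al0]); split.
- by rewrite finite_setU; split=> //; apply: finite_set1.
- by move=> al [/lamA|->].
- by move=> al; left.
- exact: star_refinement_pi_F_into_N starVV (refines_trans al0be beVV).
Qed.
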